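(* Let $L_x, L_y>0$, $L_{xy}\geq 0$, $\mu_x,\mu_y$ with $0<\mu_x\le L_x$, $0<\mu_y\le L_y$, and let $F\in\mathcal{F}(L_x, L_y, L_{xy}, \mu_x, \mu_y)$ (defined in the context). Let $(x^\star,y^\star)$ be the unique saddle point of $F$. Set $L=\max\{L_x, L_y\}$ and $\mu=\min\{\mu_x, \mu_y\}$. If $t\in\left(0, \tfrac{2\mu}{\mu L+L_{xy}^2}\right)$, then for any $(x^1,y^1)\in\mathbb{R}^n\times\mathbb{R}^m$, the point $(x^2,y^2)$ obtained by one step of the gradient descent-ascent method with step length $t$, i.e. $x^{2}=x^1-t\nabla_x F(x^1, y^1)$, $y^{2}=y^1+t\nabla_y F(x^1, y^1)$, satisfies $$ \|x^2-x^\star\|^2+\|y^2-y^\star\|^2\leq \alpha\left(\|x^1-x^\star\|^2+\|y^1-y^\star\|^2\right), $$ where $$ \alpha=1+\tfrac{1}{2}\left(L^2+\mu^2+2L_{xy}^2\right)t^2-(L+\mu)t +\tfrac{1}{2}(L-\mu)t\sqrt{(Lt + \mu t - 2)^2 + 4L_{xy}^2t^2}. $$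
   Context: $F:\mathbb{R}^n\times\mathbb{R}^m\to\mathbb{R}$ is differentiable. $\mathcal{F}(L_x, L_y, L_{xy}, \mu_x, \mu_y)$ denotes the set of such $F$ satisfying, for all $x,x_1,x_2\in\mathbb{R}^n$, $y,y_1,y_2\in\mathbb{R}^m$: $\|\nabla_x F(x_2, y)-\nabla_x F(x_1, y)\|\leq L_x\|x_2-x_1\|$; $\|\nabla_y F(x, y_2)-\nabla_y F(x, y_1)\|\leq L_y\|y_2-y_1\|$; $\|\nabla_x F(x, y_2)-\nabla_x F(x, y_1)\|\leq L_{xy}\|y_2-y_1\|$; $\|\nabla_y F(x_2, y)-\nabla_y F(x_1, y)\|\leq L_{xy}\|x_2-x_1\|$; and $F(\cdot, y)-\tfrac{\mu_x}{2}\|\cdot\|^2$ is convex for every $y$ and $F(x,\cdot)+\tfrac{\mu_y}{2}\|\cdot\|^2$ is concave for every $x$. A saddle point is $(x^\star,y^\star)$ with $F(x^\star, y)\leq F(x^\star, y^\star)\leq F(x, y^\star)$ for all $x,y$; when $\mu_x,\mu_y>0$ it exists and is unique. *)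

From HB Require Import structures.
From mathcomp Require Import all_boot all_order all_algebra.
From mathcomp Require Import all_classical all_reals all_analysis.
Set Implicit Arguments. Unset Strict Implicit. Unset Printing Implicit Defensive.
Import Order.TTheory GRing.Theory Num.Theory.
Import numFieldNormedType.Exports.
Local Open Scope ring_scope.

(* Euclidean norm on row vectors R^n (the library's default norm on 'rV is the sup norm) *)
Definition enorm {R : realType} {n : nat} (v : 'rV[R]_n) : R :=
  Num.sqrt (\sum_(i < n) (v 0 i) ^+ 2).

Definition gradx {R : realType} {n m : nat} (F : 'rV[R]_n -> 'rV[R]_m -> R)
  (x : 'rV[R]_n) (y : 'rV[R]_m) : 'rV[R]_n :=
  \row_(i < n) derive (fun x' => F x' y) x (delta_mx 0 i : 'rV[R]_n).

Definition grady {R : realType} {n m : nat} (F : 'rV[R]_n -> 'rV[R]_m -> R)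
  (x : 'rV[R]_n) (y : 'rV[R]_m) : 'rV[R]_m :=
  \row_(j < m) derive (fun y' => F x y') y (delta_mx 0 j : 'rV[R]_m).

Definition convex_fun {R : realType} {n : nat} (f : 'rV[R]_n -> R) : Prop :=
  forall (a b : 'rV[R]_n) (l : R), 0 <= l -> l <= 1 ->
    f (l *: a + (1 - l) *: b) <= l * f a + (1 - l) * f b.

Definition concave_fun {R : realType} {n : nat} (f : 'rV[R]_n -> R) : Prop :=
  convex_fun (fun v => - f v).

Definition in_class {R : realType} {n m : nat} (F : 'rV[R]_n -> 'rV[R]_m -> R)
  (Lx Ly Lxy mux muy : R) : Prop :=
  (forall p : 'rV[R]_n * 'rV[R]_m, differentiable (fun q : 'rV[R]_n * 'rV[R]_m => F q.1 q.2) p)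
  /\ (forall x1 x2 y, enorm (gradx F x2 y - gradx F x1 y) <= Lx * enorm (x2 - x1))
  /\ (forall x y1 y2, enorm (grady F x y2 - grady F x y1) <= Ly * enorm (y2 - y1))
  /\ (forall x y1 y2, enorm (gradx F x y2 - gradx F x y1) <= Lxy * enorm (y2 - y1))
  /\ (forall x1 x2 y, enorm (grady F x2 y - grady F x1 y) <= Lxy * enorm (x2 - x1))
  /\ (forall y, convex_fun (fun x => F x y - mux / 2 * enorm x ^+ 2))
  /\ (forall x, concave_fun (fun y => F x y + muy / 2 * enorm y ^+ 2)).

Definition saddle_point {R : realType} {n m : nat} (F : 'rV[R]_n -> 'rV[R]_m -> R)
  (xs : 'rV[R]_n) (ys : 'rV[R]_m) : Prop :=
  forall x y, F xs y <= F xs ys /\ F xs ys <= F x ys.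

From HB Require Import structures.
From mathcomp Require Import all_boot all_order all_algebra.
From mathcomp Require Import all_classical all_reals all_analysis.
From mathcomp Require Import ring lra.
Import Order.TTheory GRing.Theory Num.Theory.
Import numFieldNormedType.Exports.
Set Implicit Arguments. Unset Strict Implicit. Unset Printing Implicit Defensive.
Local Open Scope classical_set_scope.
Local Open Scope ring_scope.

(* Write z = (x, y) and M z = (grad_x F z, - grad_y F z), so that one step is z - t M z,
   and let A = z1 - zs.  Along each edge of the rectangle spanned by z1 and the saddle point
   zs only one block moves, and there F(., y) or -F(x, .) is mu-strongly convex and L-smooth.
   Summing the interpolation inequality of such functions around the rectangle bounds the
   monotonicity gaps of M for the pairs (z1, zs) and ((x1, ys), (xs, y1)) above by
   (L - mu) |A|^2 and below by the edge deviations
   |grad difference - mu * displacement|^2 / (2 (L - mu)).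
   Write M z1 = mu A + D + C with D the mean edge deviation and C the cross-block part,
   which the bound L_xy controls.  Then
     A - t M z1 = [(1 - t (mu + L) / 2) A - t C] - t [D - (L - mu) / 2 A],
   where the first bracket has norm at most sqrt((1 - t (mu + L) / 2)^2 + t^2 L_xy^2) |A|
   and the second at most (L - mu) / 2 |A|, up to one cross term that is split between
   the two bounds; the triangle inequality gives the factor sqrt(alpha). *)

Section DotProduct.
Context {R : realType} {n : nat}.
Implicit Types u v w : 'rV[R]_n.

Definition dot u v : R := \sum_(i < n) u 0 i * v 0 i.

Lemma dotC u v : dot u v = dot v u.
Proof. by apply: eq_bigr => i _; rewrite mulrC. Qed.

Lemma dotDl u v w : dot (u + v) w = dot u w + dot v w.
Proof. by rewrite /dot -big_split; apply: eq_bigr => i _; rewrite !mxE mulrDl. Qed.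

Lemma dotDr u v w : dot w (u + v) = dot w u + dot w v.
Proof. by rewrite dotC dotDl !(dotC w). Qed.

Lemma dotZl (k : R) u v : dot (k *: u) v = k * dot u v.
Proof. by rewrite /dot mulr_sumr; apply: eq_bigr => i _; rewrite !mxE mulrA. Qed.

Lemma dotZr (k : R) u v : dot v (k *: u) = k * dot v u.
Proof. by rewrite dotC dotZl dotC. Qed.

Lemma dotNl u v : dot (- u) v = - dot u v.
Proof. by rewrite -scaleN1r dotZl mulN1r. Qed.

Lemma dotNr u v : dot v (- u) = - dot v u.
Proof. by rewrite dotC dotNl dotC. Qed.

Lemma dotBl u v w : dot (u - v) w = dot u w - dot v w.
Proof. by rewrite dotDl dotNl. Qed.

Lemma dotBr u v w : dot w (u - v) = dot w u - dot w v.
Proof. by rewrite dotDr dotNr. Qed.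

Lemma dotNN u v : dot (- u) (- v) = dot u v.
Proof. by rewrite dotNl dotNr opprK. Qed.

Lemma dot_subC u v u' v' : dot (u - v) (u' - v') = dot (v - u) (v' - u').
Proof. by rewrite -opprB -[u' - v']opprB dotNN. Qed.

Lemma dot_dev_subC (k : R) u v u' v' :
  dot (u - v - k *: (u' - v')) (u - v - k *: (u' - v'))
  = dot (v - u - k *: (v' - u')) (v - u - k *: (v' - u')).
Proof.
have -> : v - u - k *: (v' - u') = - (u - v - k *: (u' - v')).
  by apply/rowP => i; rewrite !mxE; ring.
by rewrite dotNN.
Qed.

Lemma dot0l u : dot 0 u = 0.
Proof. by rewrite /dot big1 // => i _; rewrite mxE mul0r. Qed.

Lemma dot_ge0 u : 0 <= dot u u.
Proof. by apply: sumr_ge0 => i _; rewrite -expr2 sqr_ge0. Qed.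

Lemma dot_eq0 u : (dot u u == 0) = (u == 0).
Proof.
apply/eqP/eqP=> [uu0|->]; last exact: dot0l.
apply/rowP => i; rewrite mxE; apply/eqP; rewrite -[_ == 0]orbb -mulf_eq0.
by apply/eqP/(psumr_eq0P _ uu0) => // j _; rewrite -expr2 sqr_ge0.
Qed.

Lemma dot_cauchy_schwarz u v : dot u v ^+ 2 <= dot u u * dot v v.
Proof.
have [->|u0] := eqVneq u 0; first by rewrite !dot0l expr0n mul0r.
have uu_gt0 : 0 < dot u u by rewrite lt_def dot_eq0 u0 dot_ge0.
have := dot_ge0 (dot u u *: v - dot u v *: u).
rewrite !(dotBl, dotBr, dotZl, dotZr) (dotC v u); nra.
Qed.

Lemma enormE u : enorm u = Num.sqrt (dot u u).
Proof. by congr Num.sqrt; apply: eq_bigr => i _; rewrite expr2. Qed.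

Lemma enorm_sqr u : enorm u ^+ 2 = dot u u.
Proof. by rewrite enormE sqr_sqrtr ?dot_ge0. Qed.

Lemma enorm_ge0 u : 0 <= enorm u.
Proof. exact: sqrtr_ge0. Qed.

Lemma dot_le_enorm u v : dot u v <= enorm u * enorm v.
Proof.
apply: le_trans (ler_norm _) _.
rewrite -ler_sqr ?nnegrE ?mulr_ge0 ?enorm_ge0 //.
by rewrite real_normK ?num_real // exprMn !enorm_sqr dot_cauchy_schwarz.
Qed.

Lemma enormD u v : enorm (u + v) <= enorm u + enorm v.
Proof.
rewrite -ler_sqr ?nnegrE ?addr_ge0 ?enorm_ge0 //.
have := dot_le_enorm u v.
by rewrite sqrrD !enorm_sqr dotDl !dotDr (dotC v u); lra.
Qed.

Lemma enormZ (k : R) u : enorm (k *: u) = `|k| * enorm u.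
Proof.
by rewrite !enormE dotZl dotZr mulrA -expr2 sqrtrM ?sqr_ge0 // sqrtr_sqr.
Qed.

Lemma enormN u : enorm (- u) = enorm u.
Proof. by rewrite -scaleN1r enormZ normrN1 mul1r. Qed.

End DotProduct.

Ltac expand_dot := rewrite ?(dotDl, dotDr, dotNl, dotNr, dotZl, dotZr).

Lemma dot_row_mx {R : realType} {n1 n2 : nat} (a c : 'rV[R]_n1) (b d : 'rV[R]_n2) :
  dot (row_mx a b) (row_mx c d) = dot a c + dot b d.
Proof.
rewrite /dot big_split_ord /=.
by congr (_ + _); apply: eq_bigr => i _; rewrite ?row_mxEl ?row_mxEr.
Qed.

Lemma dot_le_of_enorm_le {R : realType} {n k : nat} (u : 'rV[R]_n) (v : 'rV[R]_k) (c : R) :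
  0 <= c -> enorm u <= c * enorm v -> dot u u <= c ^+ 2 * dot v v.
Proof.
move=> c_ge0 le_uv; rewrite -!enorm_sqr -exprMn ler_sqr ?nnegrE ?enorm_ge0 //.
by rewrite mulr_ge0 ?enorm_ge0.
Qed.

Section Gradient.
Context {R : realType}.

Lemma is_derive_dot_partials n (f : 'rV[R]_n -> R) x d : differentiable f x ->
  is_derive x d f (dot (\row_i 'D_(delta_mx 0 i) f x) d).
Proof.
move=> df; apply: DeriveDef; first exact: diff_derivable.
rewrite /dot (deriveE d df).
under eq_bigr => i _ do rewrite mxE (deriveE _ df).
rewrite {1}(row_sum_delta d) linear_sum; apply: eq_bigr => i _.
by rewrite linearZ /= mulrC.
Qed.

Lemma differentiable_partial1 n m (F : 'rV[R]_n -> 'rV[R]_m -> R) x y :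
  differentiable (fun q : 'rV[R]_n * 'rV[R]_m => F q.1 q.2) (x, y) ->
  differentiable (fun x' => F x' y) x.
Proof.
move=> dF; have -> : (fun x' => F x' y) =
  (fun q : 'rV[R]_n * 'rV[R]_m => F q.1 q.2) \o (fun x' => (x', y)) by [].
by apply: differentiable_comp => //; exact: differentiable_pair.
Qed.

Lemma differentiable_partial2 n m (F : 'rV[R]_n -> 'rV[R]_m -> R) x y :
  differentiable (fun q : 'rV[R]_n * 'rV[R]_m => F q.1 q.2) (x, y) ->
  differentiable (fun y' => F x y') y.
Proof.
move=> dF; have -> : (fun y' => F x y') =
  (fun q : 'rV[R]_n * 'rV[R]_m => F q.1 q.2) \o (fun y' => (x, y')) by [].
by apply: differentiable_comp => //; exact: differentiable_pair.
Qed.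

End Gradient.

Definition bregman {R : realType} {n : nat} (f : 'rV[R]_n -> R) (g : 'rV[R]_n -> 'rV[R]_n)
    (x y : 'rV[R]_n) : R :=
  f y - f x - dot (g x) (y - x).

Section SmoothConvex.
Context {R : realType} {n : nat}.
Variables (f : 'rV[R]_n -> R) (g : 'rV[R]_n -> 'rV[R]_n).
Hypothesis f_grad : forall x d, is_derive x d f (dot (g x) d).

Lemma strongly_convex_bregman_ge (c : R) :
  convex_fun (fun x => f x - c / 2 * enorm x ^+ 2) ->
  forall x y, c / 2 * dot (y - x) (y - x) <= bregman f g x y.
Proof.
move=> cvx x y; rewrite /bregman.
have -> : y = (y - x) + x by rewrite subrK.
move: (y - x) => d; rewrite addrK.
have [df_ex df_val] := f_grad x d.
move: (cvg_dnbhs_at_right df_ex); rewrite -/(derive f x d) df_val => quot_cvg.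
pose r h := (f (d + x) - f x - c / 2 * dot d d) + c / 2 * dot d d * h.
have r_cvg : r h @[h --> 0^'+] --> f (d + x) - f x - c / 2 * dot d d.
  apply: cvg_at_right_filter; rewrite -[X in _ --> X]addr0.
  apply: cvgD; first exact: cvg_cst.
  by rewrite -[X in _ --> X](mulr0 (c / 2 * dot d d)); exact: cvgMr.
suff: dot (g x) d <= f (d + x) - f x - c / 2 * dot d d by lra.
apply: (ler_cvg_to quot_cvg r_cvg); near=> h.
have h_gt0 : 0 < h by near: h; exact: nbhs_right_gt.
have h_lt1 : h < 1 by near: h; exact: nbhs_right_lt.
have := cvx (d + x) x h (ltW h_gt0) (ltW h_lt1).
have -> : h *: (d + x) + (1 - h) *: x = h *: d + x.
  by rewrite scalerDr scalerBl scale1r -addrA [h *: x + _]addrC subrK.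
rewrite !enorm_sqr; expand_dot; rewrite (dotC x d) /= => ineq.
rewrite -[_ *: _]/(h^-1 * _) ler_pdivrMl // /r; nra.
Unshelve. all: by end_near.
Qed.

Lemma is_derive_along_line (x d : 'rV[R]_n) (s : R) :
  is_derive s 1 (fun s : R => f (s *: d + x)) (dot (g (s *: d + x)) d).
Proof.
have [df_ex df_val] := f_grad (s *: d + x) d.
have quotE : (fun h : R => h^-1 *: ((fun s : R => f (s *: d + x)) (h *: 1 + s)
               - f (s *: d + x)))
       = (fun h : R => h^-1 *: (f (h *: d + (s *: d + x)) - f (s *: d + x))).
  by apply: funext => h; rewrite -[h%:A]/(h * 1) mulr1 scalerDl addrA.
by split; rewrite /derivable /derive /= quotE.
Qed.

Lemma lipschitz_grad_bregman_le (L : R) :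
  (forall x1 x2, enorm (g x2 - g x1) <= L * enorm (x2 - x1)) ->
  forall x y, bregman f g x y <= L / 2 * dot (y - x) (y - x).
Proof.
move=> g_lip x y; rewrite /bregman.
have -> : y = (y - x) + x by rewrite subrK.
move: (y - x) => d; rewrite addrK.
pose D0 := dot (g x) d; pose k := L / 2 * dot d d.
pose phi := (fun s : R => f (s *: d + x)) - (D0 \*: id + k \*: id ^+ 2).
have phi_derive (s : R) :
    is_derive s 1 phi (dot (g (s *: d + x)) d - (D0 + k * (2 * s))).
  apply: is_derive_eq (is_deriveB (is_derive_along_line x d s)
    (is_deriveD (is_deriveZ D0 (is_derive_id s 1))
                (is_deriveZ k (is_deriveX 2 (is_derive_id s 1))))) _.
  by rewrite /= expr1 -[D0%:A]/(D0 * 1) -[(2 * s)%:A]/(2 * s * 1) -[k *: _]/(k * _) !mulr1.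
have phi_homo : {in `[0, 1] &, {homo phi : a b /~ a <= b}}.
  apply: ler0_derive1_le_cc.
  - by move=> s _; have [] := phi_derive s.
  - move=> s; rewrite in_itv /= => /andP[s_gt0 s_lt1].
    rewrite derive1E derive_val.
    suff : dot (g (s *: d + x)) d - D0 <= L * s * dot d d by rewrite /k; lra.
    rewrite /D0 -dotBl; apply: le_trans (dot_le_enorm _ _) _.
    have := g_lip x (s *: d + x); rewrite addrK enormZ (gtr0_norm s_gt0) => lip.
    apply: le_trans (ler_wpM2r (enorm_ge0 _) lip) _.
    by rewrite -enorm_sqr expr2 !mulrA.
  - by apply: derivable_within_continuous => s _; have [] := phi_derive s.
have := phi_homo 1 0; rewrite !in_itv /= ler01 !lexx => /(_ isT isT isT).
rewrite /phi !fctE /= scale0r add0r scale1r expr1n expr0n /=.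
rewrite -[D0%:A]/(D0 * 1) -[k *: 1]/(k * 1) !scaler0 !mulr1 /k /D0 addr0 subr0; lra.
Qed.

End SmoothConvex.

Definition sandwiched {R : realType} {n : nat} (f : 'rV[R]_n -> R)
    (g : 'rV[R]_n -> 'rV[R]_n) (mu L : R) : Prop :=
  forall x y, mu / 2 * dot (y - x) (y - x) <= bregman f g x y <= L / 2 * dot (y - x) (y - x).

Section Sandwiched.
Context {R : realType} {n : nat}.
Variables (f : 'rV[R]_n -> R) (g : 'rV[R]_n -> 'rV[R]_n).

Lemma sandwichedW (mu L mu' L' : R) : mu <= mu' -> L' <= L ->
  sandwiched f g mu' L' -> sandwiched f g mu L.
Proof.
move=> le_mu le_L fg x y; have /andP[lo hi] := fg x y.
have yx_ge0 := dot_ge0 (y - x).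
by apply/andP; split; nra.
Qed.

Lemma sandwiched_convex_lipschitz (c L : R) :
  (forall x d, is_derive x d f (dot (g x) d)) ->
  convex_fun (fun x => f x - c / 2 * enorm x ^+ 2) ->
  (forall x1 x2, enorm (g x2 - g x1) <= L * enorm (x2 - x1)) ->
  sandwiched f g c L.
Proof.
move=> f_grad cvx g_lip x y; apply/andP; split.
  exact: strongly_convex_bregman_ge.
exact: lipschitz_grad_bregman_le.
Qed.

Variables (mu L : R).
Hypothesis fg : sandwiched f g mu L.

Lemma bregman_interpolation x y :
  dot (g y - g x - mu *: (y - x)) (g y - g x - mu *: (y - x))
    <= 2 * (L - mu) * (bregman f g x y - mu / 2 * dot (y - x) (y - x)).
Proof.
set G := g y - g x - mu *: (y - x).
set D := bregman f g x y - mu / 2 * dot (y - x) (y - x).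
have gyE : g y = G + mu *: (y - x) + g x by rewrite /G !subrK.
clearbody G.
(* Compare f at [y - s G] from below (base point x) and from above (base point y). *)
have step (s : R) : s * dot G G - (L - mu) / 2 * s ^+ 2 * dot G G <= D.
  have /andP[lo _] := fg x (y - s *: G).
  have /andP[_ hi] := fg y (y - s *: G).
  move: lo hi; rewrite /D /bregman gyE.
  have -> : y - s *: G - x = (y - x) - s *: G by rewrite addrAC.
  have -> : y - s *: G - y = - (s *: G) by rewrite addrAC subrr add0r.
  move: (y - x) => d.
  by expand_dot; rewrite (dotC G d); lra.
have /andP[D_ge0 D_le] : 0 <= D <= (L - mu) / 2 * dot (y - x) (y - x).
  by have /andP[lo hi] := fg x y; apply/andP; split; rewrite /D; lra.
have [L_mu|L_mu] := lerP L mu.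
  have D0 : D = 0 by have := dot_ge0 (y - x); nra.
  have := step 1; have := dot_ge0 G; rewrite D0 mulr0; nra.
have := step (L - mu)^-1.
have -> : (L - mu)^-1 * dot G G - (L - mu) / 2 * (L - mu)^-1 ^+ 2 * dot G G
   = dot G G / (2 * (L - mu)) by field; rewrite lt0r_neq0 // subr_gt0.
by rewrite ler_pdivrMr ?mulr_gt0 ?subr_gt0 //; lra.
Qed.

Lemma sandwiched_edge x y :
  let D := bregman f g x y - mu / 2 * dot (y - x) (y - x) in
  [/\ 0 <= D, D <= (L - mu) / 2 * dot (y - x) (y - x),
      dot (g y - g x - mu *: (y - x)) (g y - g x - mu *: (y - x)) <= 2 * (L - mu) * D &
      dot (g x - g y - mu *: (x - y)) (g x - g y - mu *: (x - y)) <= 2 * (L - mu) * D].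
Proof.
have /andP[lo hi] := fg x y.
rewrite (dot_dev_subC _ (g x)); split; rewrite ?bregman_interpolation //; lra.
Qed.

Lemma sandwiched_min_grad0 x0 : 0 < L -> (forall x, f x0 <= f x) -> g x0 = 0.
Proof.
move=> L_gt0 x0_min; apply/eqP; rewrite -dot_eq0 eq_le dot_ge0 andbT.
set y := x0 - L^-1 *: g x0.
have /andP[_ hi] := fg x0 y.
move: hi (x0_min y); rewrite /bregman.
have -> : y - x0 = - (L^-1 *: g x0) by rewrite /y addrAC subrr add0r.
rewrite dotNN dotNr !dotZr !dotZl.
have -> : L / 2 * (L^-1 * (L^-1 * dot (g x0) (g x0))) = L^-1 * dot (g x0) (g x0) / 2.
  by field; rewrite lt0r_neq0.
have Linv_gt0 : 0 < L^-1 by rewrite invr_gt0.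
move=> hi lo; rewrite -(pmulr_rle0 _ Linv_gt0); lra.
Qed.

End Sandwiched.

Section SaddleGap.
Context {R : realType} {n m : nat}.
Variables (F : 'rV[R]_n -> 'rV[R]_m -> R).
Variables (gx : 'rV[R]_n -> 'rV[R]_m -> 'rV[R]_n) (hy : 'rV[R]_n -> 'rV[R]_m -> 'rV[R]_m).
Variables (mu L : R).
Hypothesis F_x : forall y, sandwiched (F^~ y) (gx^~ y) mu L.
(* [hy] is the gradient of [- F x], so [(gx, hy)] is the monotone saddle operator. *)
Hypothesis F_y : forall x, sandwiched (fun y => - F x y) (hy x) mu L.

Definition saddle_gap x y x' y' :=
  dot (gx x y - gx x' y') (x - x') + dot (hy x y - hy x' y') (y - y')
  - mu * (dot (x - x') (x - x') + dot (y - y') (y - y')).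

Definition edge_deviation x y x' y' :=
  (dot (gx x y - gx x' y - mu *: (x - x')) (gx x y - gx x' y - mu *: (x - x'))
   + dot (hy x y - hy x y' - mu *: (y - y')) (hy x y - hy x y' - mu *: (y - y')))
  + (dot (gx x y' - gx x' y' - mu *: (x - x')) (gx x y' - gx x' y' - mu *: (x - x'))
   + dot (hy x' y - hy x' y' - mu *: (y - y')) (hy x' y - hy x' y' - mu *: (y - y'))).

Lemma edge_deviation_swap x y x' y' : edge_deviation x y' x' y = edge_deviation x y x' y'.
Proof.
by rewrite /edge_deviation (dot_dev_subC _ (hy x y')) (dot_dev_subC _ (hy x' y')); lra.
Qed.

(* The gap is the sum of the Bregman excesses along the four edges; the values of F cancel. *)
Lemma saddle_gap_bounds x y x' y' :
  [/\ 0 <= saddle_gap x y x' y',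
      saddle_gap x y x' y' <= (L - mu) * (dot (x - x') (x - x') + dot (y - y') (y - y')) &
      edge_deviation x y x' y' <= 2 * (L - mu) * saddle_gap x y x' y'].
Proof.
have [e1_ge0 e1_le _ e1_dev] := sandwiched_edge (F_x y) x x'.
have [e2_ge0 e2_le e2_dev _] := sandwiched_edge (F_x y') x' x.
have [e3_ge0 e3_le _ e3_dev] := sandwiched_edge (F_y x) y y'.
have [e4_ge0 e4_le e4_dev _] := sandwiched_edge (F_y x') y' y.
move: e1_ge0 e1_le e1_dev e2_ge0 e2_le e2_dev e3_ge0 e3_le e3_dev e4_ge0 e4_le e4_dev.
rewrite /saddle_gap /edge_deviation /bregman !(dot_subC x' x) !(dot_subC y' y).
move: (dot (gx x y - _ - _) _) (dot (gx x y' - _ - _) _) => d1 d2.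
move: (dot (hy x y - _ - _) _) (dot (hy x' y - _ - _) _) => d3 d4.
move: (dot (x - x') (x - x')) (dot (y - y') (y - y')) => ax ay.
by expand_dot => *; split; lra.
Qed.

End SaddleGap.

Lemma ler_of_sqr {R : realType} (x c : R) : 0 <= c -> x ^+ 2 <= c ^+ 2 -> x <= c.
Proof. by move=> c_ge0 le_sqr; nra. Qed.

Lemma norm_half_diff_le {R : realType} (Z g1 g2 d K : R) : 0 <= K ->
  d <= 2 * K * g1 -> d <= 2 * K * g2 ->
  0 <= g1 -> g1 <= K * Z -> 0 <= g2 -> g2 <= K * Z ->
  K * `|(g1 - g2) / 2| <= (K * (g1 + g2) - d) / 2 /\ `|(g1 - g2) / 2| <= K * Z / 2.
Proof.
move=> K_ge0 d_le1 d_le2 g1_ge0 g1_le g2_ge0 g2_le; split.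
  by have [X_ge0|X_lt0] := lerP 0 ((g1 - g2) / 2);
    [rewrite ger0_norm // | rewrite ltr0_norm //]; lra.
by rewrite ler_norml; apply/andP; split; lra.
Qed.

Lemma sqrt_add_le {R : realType} (Z A B X rho s c t K : R) :
  0 <= Z -> 0 <= A -> 0 <= B -> `|c| <= s -> 0 <= t -> 0 <= K ->
  A <= s ^+ 2 * Z - 2 * c * t * X -> B <= K ^+ 2 * Z / 4 - rho ->
  K * `|X| <= rho -> `|X| <= K * Z / 2 ->
  Num.sqrt A + t * Num.sqrt B <= (s + t * K / 2) * Num.sqrt Z.
Proof.
move=> Z_ge0 A_ge0 B_ge0 c_le_s t_ge0 K_ge0 A_le B_le X_le_rho X_le_Z.
have s_ge0 : 0 <= s := le_trans (normr_ge0 c) c_le_s.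
have cX_le : - (c * X) <= s * `|X|.
  by apply: le_trans (ler_norm _) _; rewrite normrN normrM ler_wpM2r.
have [Z_le0|Z_gt0] := lerP Z 0.
  have Z0 : Z = 0 by apply/le_anti/andP.
  have X0 : X = 0.
    by apply/normr0_eq0/le_anti; rewrite normr_ge0 andbT; move: X_le_Z; rewrite Z0; lra.
  move: A_le B_le X_le_rho; rewrite Z0 X0 normr0 !mulr0 sqrtr0 => A_le B_le rho_ge0.
  by rewrite !ler0_sqrtr ?mulr0 ?addr0 //; lra.
set z := Num.sqrt Z.
have z_gt0 : 0 < z by rewrite sqrtr_gt0.
have zE : z ^+ 2 = Z by rewrite sqr_sqrtr // ltW.
(* Split the slack [t |X|] between the two square roots. *)
pose e := t * `|X| / z.
have ez : e * z = t * `|X| by rewrite /e divfK // lt0r_neq0.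
have e_ge0 : 0 <= e by rewrite /e divr_ge0 ?mulr_ge0 // ltW.
have sqrtA_le : Num.sqrt A <= s * z + e.
  apply: ler_of_sqr; first by rewrite addr_ge0 // mulr_ge0 // ltW.
  have -> : (s * z + e) ^+ 2 = s ^+ 2 * Z + 2 * s * (e * z) + e ^+ 2 by rewrite -zE; ring.
  rewrite sqr_sqrtr // ez; nra.
have sqrtB_le : t * Num.sqrt B <= t * K * z / 2 - e.
  have e_le : e <= t * K * z / 2.
    rewrite -(ler_pM2r z_gt0) ez.
    have -> : t * K * z / 2 * z = t * (K * Z / 2) by rewrite -zE; ring.
    exact: ler_wpM2l.
  apply: ler_of_sqr; first lra.
  rewrite exprMn sqr_sqrtr //.
  have -> : (t * K * z / 2 - e) ^+ 2 = t ^+ 2 * (K ^+ 2 * Z / 4) - t * K * (e * z) + e ^+ 2.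
    by rewrite -zE; field.
  rewrite ez; have := sqr_ge0 e; have := sqr_ge0 t; nra.
have -> : (s + t * K / 2) * z = s * z + t * K * z / 2 by field.
lra.
Qed.

Section OneStep.
Context {R : realType} {k : nat}.
Variables (A G U W : 'rV[R]_k) (mu L l t : R).
Hypotheses (mu_le_L : mu <= L) (t_ge0 : 0 <= t).

Local Notation K := (L - mu).
Local Notation Z := (dot A A).
Let gap1 := dot G A - mu * Z.
Let gap2 := dot (W - U) A - mu * Z.
Let dev := dot (G - U - mu *: A) (G - U - mu *: A) + dot (W - mu *: A) (W - mu *: A).

Hypotheses (dev_le_gap1 : dev <= 2 * K * gap1) (dev_le_gap2 : dev <= 2 * K * gap2).
Hypotheses (gap1_ge0 : 0 <= gap1) (gap1_le : gap1 <= K * Z).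
Hypotheses (gap2_ge0 : 0 <= gap2) (gap2_le : gap2 <= K * Z).
Hypotheses (U_le : dot U U <= l ^+ 2 * Z) (GW_le : dot (G - W) (G - W) <= l ^+ 2 * Z).

(* [G - mu A] is the mean edge deviation plus the cross-block part [Tc]; [Ts] recentres
   the former at [(L - mu) / 2 * A]. *)
Let m := 1 - t * (mu + L) / 2.
Let Tc := 2^-1 *: (U + (G - W)).
Let Ts := 2^-1 *: ((G - U - mu *: A) + (W - mu *: A)) - (K / 2) *: A.
Let N := m *: A - t *: Tc.

Lemma step_decomposition : A - t *: G = N - t *: Ts.
Proof. by rewrite /N /Ts /Tc /m; apply/rowP => i; rewrite !mxE; field. Qed.

Lemma cross_part_dot : dot A Tc = (gap1 - gap2) / 2.
Proof.
rewrite /Tc /gap1 /gap2; expand_dot; rewrite (dotC A U) (dotC A G) (dotC A W); lra.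
Qed.

Lemma N_bound : dot N N <= (m ^+ 2 + t ^+ 2 * l ^+ 2) * Z - 2 * m * t * dot A Tc.
Proof.
have Tc_le : dot Tc Tc <= l ^+ 2 * Z.
  have := dot_ge0 (U - (G - W)); move: U_le GW_le.
  rewrite /Tc dotZl dotZr; move: (G - W) => V.
  expand_dot; rewrite (dotC V U); lra.
have := ler_wpM2l (sqr_ge0 t) Tc_le.
rewrite /N; move: Tc => T; expand_dot; rewrite (dotC T A); lra.
Qed.

Lemma Ts_bound : dot Ts Ts <= K ^+ 2 * Z / 4 - (K * (gap1 + gap2) - dev) / 2.
Proof.
have PQ_A : dot ((G - U - mu *: A) + (W - mu *: A)) A = gap1 + gap2.
  rewrite /gap1 /gap2; expand_dot; lra.
move: PQ_A; rewrite /Ts /dev; move: (G - U - mu *: A) (W - mu *: A) => P Q PQ_A.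
have := dot_ge0 (P - Q); move: PQ_A.
expand_dot; rewrite (dotC Q P) (dotC A P) (dotC A Q) => ->; lra.
Qed.

Lemma one_step_contraction :
  dot (A - t *: G) (A - t *: G)
    <= (Num.sqrt (m ^+ 2 + t ^+ 2 * l ^+ 2) + t * K / 2) ^+ 2 * Z.
Proof.
set s := Num.sqrt _.
have K_ge0 : 0 <= K by rewrite subr_ge0.
have m_le_s : `|m| <= s.
  by rewrite -sqrtr_sqr ler_wsqrtr // lerDl mulr_ge0 ?sqr_ge0.
have N_le : dot N N <= s ^+ 2 * Z - 2 * m * t * dot A Tc.
  rewrite sqr_sqrtr; first exact: N_bound.
  by apply: addr_ge0; rewrite ?sqr_ge0 // mulr_ge0 ?sqr_ge0.
have [X_le_rho X_le_Z] := norm_half_diff_le K_ge0 dev_le_gap1 dev_le_gap2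
  gap1_ge0 gap1_le gap2_ge0 gap2_le.
rewrite -cross_part_dot in X_le_rho X_le_Z.
have norm_le := sqrt_add_le (dot_ge0 A) (dot_ge0 N) (dot_ge0 Ts) m_le_s t_ge0 K_ge0
  N_le Ts_bound X_le_rho X_le_Z.
move: norm_le; rewrite step_decomposition -!enormE => norm_le.
have sub_le : enorm (N - t *: Ts) <= enorm N + t * enorm Ts.
  by apply: le_trans (enormD _ _) _; rewrite enormN enormZ ger0_norm.
rewrite -enorm_sqr -[Z]enorm_sqr -exprMn ler_sqr ?nnegrE ?enorm_ge0 //.
  exact: le_trans sub_le norm_le.
by rewrite mulr_ge0 ?enorm_ge0 // addr_ge0 ?sqrtr_ge0 // divr_ge0 // mulr_ge0.
Qed.

End OneStep.

Section GDAStep.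
Context {R : realType} {n m : nat}.
Variables (F : 'rV[R]_n -> 'rV[R]_m -> R).
Variables (gx : 'rV[R]_n -> 'rV[R]_m -> 'rV[R]_n) (hy : 'rV[R]_n -> 'rV[R]_m -> 'rV[R]_m).
Variables (mu L l : R).
Hypothesis F_x : forall y, sandwiched (F^~ y) (gx^~ y) mu L.
Hypothesis F_y : forall x, sandwiched (fun y => - F x y) (hy x) mu L.
Hypothesis gx_lip : forall x y y', enorm (gx x y - gx x y') <= l * enorm (y - y').
Hypothesis hy_lip : forall x x' y, enorm (hy x y - hy x' y) <= l * enorm (x - x').
Hypotheses (mu_le_L : mu <= L) (l_ge0 : 0 <= l).

Lemma gda_step_bound xs ys x1 y1 t : 0 <= t -> gx xs ys = 0 -> hy xs ys = 0 ->
  dot (x1 - xs - t *: gx x1 y1) (x1 - xs - t *: gx x1 y1)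
  + dot (y1 - ys - t *: hy x1 y1) (y1 - ys - t *: hy x1 y1)
  <= (Num.sqrt ((1 - t * (mu + L) / 2) ^+ 2 + t ^+ 2 * l ^+ 2) + t * (L - mu) / 2) ^+ 2
     * (dot (x1 - xs) (x1 - xs) + dot (y1 - ys) (y1 - ys)).
Proof.
move=> t_ge0 gx0 hy0.
have [gap1_ge0 gap1_le dev1] := saddle_gap_bounds F_x F_y x1 y1 xs ys.
have [gap2_ge0 gap2_le dev2] := saddle_gap_bounds F_x F_y x1 ys xs y1.
rewrite edge_deviation_swap in dev2.
have u_le := dot_le_of_enorm_le l_ge0 (gx_lip xs y1 ys).
have z_le := dot_le_of_enorm_le l_ge0 (hy_lip x1 xs ys).
have Gw_le := dot_le_of_enorm_le l_ge0 (gx_lip x1 y1 ys).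
have Hv_le := dot_le_of_enorm_le l_ge0 (hy_lip x1 xs y1).
move: gap1_ge0 gap1_le dev1 gap2_ge0 gap2_le dev2 u_le z_le Gw_le Hv_le.
rewrite /saddle_gap /edge_deviation gx0 hy0 !subr0 (dot_subC (hy x1 ys)) (dot_subC ys).
move=> gap1_ge0 gap1_le dev1 gap2_ge0 gap2_le dev2 u_le z_le Gw_le Hv_le.
have := (one_step_contraction (A := row_mx (x1 - xs) (y1 - ys))
  (G := row_mx (gx x1 y1) (hy x1 y1)) (U := row_mx (gx xs y1) (hy x1 ys))
  (W := row_mx (gx x1 ys) (hy xs y1)) mu_le_L t_ge0).
rewrite !(opp_row_mx, add_row_mx, scale_row_mx, dot_row_mx).
by apply=> //; lra.
Qed.
End GDAStep.

Section InClass.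
Context {R : realType} {n m : nat}.
Variables (F : 'rV[R]_n -> 'rV[R]_m -> R) (Lx Ly Lxy mux muy : R).
Hypothesis F_class : in_class F Lx Ly Lxy mux muy.

Lemma in_class_sandwiched_x y : sandwiched (F^~ y) (gradx F ^~ y) mux Lx.
Proof.
case: F_class => dF [gx_lip [_ [_ [_ [cvx_x _]]]]].
apply: sandwiched_convex_lipschitz => // x d.
exact: is_derive_dot_partials (differentiable_partial1 (dF (x, y))).
Qed.

Lemma in_class_sandwiched_y x : sandwiched (fun y => - F x y) (fun y => - grady F x y) muy Ly.
Proof.
case: F_class => dF [_ [gy_lip [_ [_ [_ ccv_y]]]]].
apply: sandwiched_convex_lipschitz => // [y d|a b s s_ge0 s_le1|y1 y2].
- rewrite dotNl; apply: is_deriveN.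
  exact: is_derive_dot_partials (differentiable_partial2 (dF (x, y))).
- by have := ccv_y x a b s s_ge0 s_le1; rewrite /= !opprD.
- by rewrite -opprD enormN; exact: gy_lip.
Qed.

End InClass.

Lemma gda_rate_sqr {R : realType} (L mu l t : R) :
  1 + 2^-1 * (L ^+ 2 + mu ^+ 2 + 2 * l ^+ 2) * t ^+ 2 - (L + mu) * t
    + 2^-1 * (L - mu) * t * Num.sqrt ((L * t + mu * t - 2) ^+ 2 + 4 * l ^+ 2 * t ^+ 2)
  = (Num.sqrt ((1 - t * (mu + L) / 2) ^+ 2 + t ^+ 2 * l ^+ 2) + t * (L - mu) / 2) ^+ 2.
Proof.
set q := (1 - t * (mu + L) / 2) ^+ 2 + t ^+ 2 * l ^+ 2.
have q_ge0 : 0 <= q by apply: addr_ge0; rewrite ?sqr_ge0 // mulr_ge0 ?sqr_ge0.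
have -> : (L * t + mu * t - 2) ^+ 2 + 4 * l ^+ 2 * t ^+ 2 = 2 ^+ 2 * q by rewrite /q; field.
rewrite sqrtrM ?sqr_ge0 // sqrtr_sqr normr_nat.
have -> : (Num.sqrt q + t * (L - mu) / 2) ^+ 2
    = Num.sqrt q ^+ 2 + t * (L - mu) * Num.sqrt q + (t * (L - mu) / 2) ^+ 2 by field.
by rewrite sqr_sqrtr // /q; field.
Qed.

Theorem theorem2p2 (R : realType) (n m : nat) (Lx Ly Lxy mux muy : R)
  (F : 'rV[R]_n -> 'rV[R]_m -> R) (xs : 'rV[R]_n) (ys : 'rV[R]_m)
  (t : R) (x1 : 'rV[R]_n) (y1 : 'rV[R]_m) :
  0 < Lx -> 0 < Ly -> 0 <= Lxy ->
  0 < mux -> mux <= Lx -> 0 < muy -> muy <= Ly ->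
  in_class F Lx Ly Lxy mux muy ->
  saddle_point F xs ys ->
  let L := Num.max Lx Ly in
  let mu := Num.min mux muy in
  0 < t -> t < 2 * mu / (mu * L + Lxy ^+ 2) ->
  let x2 := x1 - t *: gradx F x1 y1 in
  let y2 := y1 + t *: grady F x1 y1 in
  let alpha := 1 + 2^-1 * (L ^+ 2 + mu ^+ 2 + 2 * Lxy ^+ 2) * t ^+ 2 - (L + mu) * t
      + 2^-1 * (L - mu) * t * Num.sqrt ((L * t + mu * t - 2) ^+ 2 + 4 * Lxy ^+ 2 * t ^+ 2) in
  enorm (x2 - xs) ^+ 2 + enorm (y2 - ys) ^+ 2
    <= alpha * (enorm (x1 - xs) ^+ 2 + enorm (y1 - ys) ^+ 2).
Proof.
(* The upper bound on [t] only makes [alpha < 1]; the inequality holds for every [t > 0]. *)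
move=> Lx_gt0 _ Lxy_ge0 _ mux_le _ _ F_class F_saddle L mu t_gt0 _ /=.
have mu_le_mux : mu <= mux by rewrite ge_min lexx.
have mu_le_muy : mu <= muy by rewrite ge_min lexx orbT.
have Lx_le_L : Lx <= L by rewrite le_max lexx.
have Ly_le_L : Ly <= L by rewrite le_max lexx orbT.
have F_x := fun y => sandwichedW mu_le_mux Lx_le_L (in_class_sandwiched_x F_class y).
have F_y := fun x => sandwichedW mu_le_muy Ly_le_L (in_class_sandwiched_y F_class x).
have L_gt0 : 0 < L := lt_le_trans Lx_gt0 Lx_le_L.
have gx0 : gradx F xs ys = 0.
  by apply: (sandwiched_min_grad0 (F_x ys) L_gt0) => x; case: (F_saddle x ys).
have hy0 : - grady F xs ys = 0.
  by apply: (sandwiched_min_grad0 (F_y xs) L_gt0) => y; rewrite lerN2; case: (F_saddle xs y).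
case: F_class => _ [_ [_ [gx_lip_y [gy_lip_x _]]]].
have -> : x1 - t *: gradx F x1 y1 - xs = x1 - xs - t *: gradx F x1 y1 by rewrite addrAC.
have -> : y1 + t *: grady F x1 y1 - ys = y1 - ys - t *: (- grady F x1 y1).
  by rewrite scalerN opprK addrAC.
rewrite gda_rate_sqr !enorm_sqr.
apply: (gda_step_bound F_x F_y) => //.
- by move=> x x' y; rewrite -opprD enormN; exact: gy_lip_x.
- exact: le_trans mu_le_mux (le_trans mux_le Lx_le_L).
- exact: ltW.
Qed.
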